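(* Let $\mathbf{A}$ be an additive category with weak kernels, let $T: \mathbf{A}\times\mathbf{A}\to\mathcal{A}(\mathbf{A})$ be a bilinear functor with extension $\otimes := \widehat{T}: \mathcal{A}(\mathbf{A})\times\mathcal{A}(\mathbf{A})\to\mathcal{A}(\mathbf{A})$, and let $A = (a\xleftarrow{\rho_a} r_a)\in\mathcal{A}(\mathbf{A})$. Suppose the functors $-\otimes a$ and $-\otimes r_a$ from $\mathcal{A}(\mathbf{A})$ to $\mathcal{A}(\mathbf{A})$ have right adjoints. Then $-\otimes A: \mathcal{A}(\mathbf{A})\to\mathcal{A}(\mathbf{A})$ has a right adjoint.
   Context: The Freyd category $\mathcal{A}(\mathbf{A})$: objects are morphisms $\rho_a: r_a \to a$ of $\mathbf{A}$, written $(a \xleftarrow{\rho_a} r_a)$; morphisms $(a \xleftarrow{\rho_a} r_a) \to (b \xleftarrow{\rho_b} r_b)$ are morphisms $\alpha: a\to b$ of $\mathbf{A}$ with $\alpha\circ\rho_a = \rho_b\circ\omega$ for some $\omega: r_a\to r_b$, modulo those of the form $\rho_b\circ\lambda$ with $\lambda: a\to r_b$; it is additive with cokernels. Objects $x\in\mathbf{A}$ are regarded as objects $(x\leftarrow 0)$ of $\mathcal{A}(\mathbf{A})$. The extension $\widehat T$ is the bilinear functor given on objects by $\widehat T(A,B) = \operatorname{cok}\big(T(a,r_b)\oplus T(r_a,b) \xrightarrow{(T(\mathrm{id}_a,\rho_b),\ T(\rho_a,\mathrm{id}_b))} T(a,b)\big)$ and on morphisms by the induced maps; it is right exact in each variable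 and $\widehat T(x,y)\cong T(x,y)$ for $x,y\in\mathbf{A}$. A weak kernel of $\alpha: x\to y$ is $\iota: k\to x$ with $\alpha\circ\iota=0$ through which every $\tau$ with $\alpha\circ\tau=0$ factors (not necessarily uniquely). *)

From mathcomp Require Import all_boot all_algebra.
Set Implicit Arguments. Unset Strict Implicit. Unset Printing Implicit Defensive.
Import GRing.Theory.
Local Open Scope ring_scope.

Record AddCat := {
  Ob :> Type;
  Hom : Ob -> Ob -> zmodType;
  idm : forall a, Hom a a;
  comp : forall a b c, Hom b c -> Hom a b -> Hom a c;
  compA : forall a b c d (h : Hom c d) (g : Hom b c) (f : Hom a b),
    comp h (comp g f) = comp (comp h g) f;
  comp1m : forall a b (f : Hom a b), comp (idm b) f = f;
  compm1 : forall a b (f : Hom a b), comp f (idm a) = f;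
  compDl : forall a b c (g1 g2 : Hom b c) (f : Hom a b),
    comp (g1 + g2) f = comp g1 f + comp g2 f;
  compDr : forall a b c (g : Hom b c) (f1 f2 : Hom a b),
    comp g (f1 + f2) = comp g f1 + comp g f2;
  zob : Ob;
  zob_init : forall a (f g : Hom zob a), f = g;
  zob_term : forall a (f g : Hom a zob), f = g;
  bsum : Ob -> Ob -> Ob;
  bin1 : forall a b, Hom a (bsum a b);
  bin2 : forall a b, Hom b (bsum a b);
  bpr1 : forall a b, Hom (bsum a b) a;
  bpr2 : forall a b, Hom (bsum a b) b;
  bpr1in1 : forall a b, comp (bpr1 a b) (bin1 a b) = idm a;
  bpr2in2 : forall a b, comp (bpr2 a b) (bin2 a b) = idm b;
  bpr1in2 : forall a b, comp (bpr1 a b) (bin2 a b) = 0;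
  bpr2in1 : forall a b, comp (bpr2 a b) (bin1 a b) = 0;
  bsum_id : forall a b,
    comp (bin1 a b) (bpr1 a b) + comp (bin2 a b) (bpr2 a b) = idm (bsum a b)
}.

Arguments Hom {C} : rename.
Arguments idm {C} a : rename.
Arguments comp {C a b c} : rename.
Arguments zob {C} : rename.
Arguments bsum {C} : rename.
Arguments bin1 {C a b} : rename.
Arguments bin2 {C a b} : rename.
Arguments bpr1 {C a b} : rename.
Arguments bpr2 {C a b} : rename.

Definition has_weak_kernels (C : AddCat) : Prop :=
  forall (x y : C) (alpha : Hom x y),
    exists (k : C) (iota : Hom k x),
      comp alpha iota = 0 /\
      forall (t : C) (tau : Hom t x), comp alpha tau = 0 ->
        exists sigma : Hom t k, tau = comp iota sigma.

Definition bmap (C : AddCat) (a b c : C) (f : Hom a c) (g : Hom b c)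
  : Hom (bsum a b) c := comp f bpr1 + comp g bpr2.

Record FObj (C : AddCat) := FOb { fo : C; fr : C; frho : Hom fr fo }.
Arguments FOb {C} fo fr frho.
Arguments fo {C}. Arguments fr {C}. Arguments frho {C}.

(* representatives of morphisms (a <- r_a) -> (b <- r_b) *)
Definition FHom (C : AddCat) (A B : FObj C) :=
  { alpha : Hom (fo A) (fo B) |
    exists omega : Hom (fr A) (fr B), comp alpha (frho A) = comp (frho B) omega }.

Definition requiv (C : AddCat) (B : FObj C) (a : C) (u v : Hom a (fo B)) : Prop :=
  exists lambda : Hom a (fr B), u - v = comp (frho B) lambda.
Arguments requiv {C} B {a}.

(* equality of morphisms in A(A) *)
Definition fequiv (C : AddCat) (A B : FObj C) (f g : FHom A B) : Prop :=
  requiv B (sval f) (sval g).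

Lemma fcomp_proof (C : AddCat) (A B D : FObj C) (g : FHom B D) (f : FHom A B) :
  exists omega : Hom (fr A) (fr D),
    comp (comp (sval g) (sval f)) (frho A) = comp (frho D) omega.
Proof.
case: f => f [w1 e1]; case: g => g [w2 e2] /=.
exists (comp w2 w1).
by rewrite -compA e1 !compA e2.
Qed.

Definition fcomp (C : AddCat) (A B D : FObj C) (g : FHom B D) (f : FHom A B)
  : FHom A D := exist _ (comp (sval g) (sval f)) (fcomp_proof g f).

Lemma fid_proof (C : AddCat) (A : FObj C) :
  exists omega : Hom (fr A) (fr A), comp (idm (fo A)) (frho A) = comp (frho A) omega.
Proof. by exists (idm (fr A)); rewrite comp1m compm1. Qed.

Definition fid (C : AddCat) (A : FObj C) : FHom A A :=
  exist _ (idm (fo A)) (fid_proof A).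

Definition obj_in (C : AddCat) (x : C) : FObj C := FOb x zob 0.

Record BiFunctor (C : AddCat) := {
  Tob : C -> C -> FObj C;
  Tmor : forall a a' b b', Hom a a' -> Hom b b' -> FHom (Tob a b) (Tob a' b');
  Tmor_id : forall a b, fequiv (Tmor (idm a) (idm b)) (fid (Tob a b));
  Tmor_comp : forall a a' a'' b b' b''
      (al : Hom a a') (al' : Hom a' a'') (be : Hom b b') (be' : Hom b' b''),
      fequiv (Tmor (comp al' al) (comp be' be)) (fcomp (Tmor al' be') (Tmor al be));
  TmorDl : forall a a' b b' (al1 al2 : Hom a a') (be : Hom b b'),
      requiv (Tob a' b') (sval (Tmor (al1 + al2) be))
             (sval (Tmor al1 be) + sval (Tmor al2 be));
  TmorDr : forall a a' b b' (al : Hom a a') (be1 be2 : Hom b b'),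
      requiv (Tob a' b') (sval (Tmor al (be1 + be2)))
             (sval (Tmor al be1) + sval (Tmor al be2))
}.
Arguments Tob {C} T : rename.
Arguments Tmor {C} T {a a' b b'} : rename.

(* ---------- The extension hat T.
   hat T (A, B) = cok( T(a,r_b) (+) T(r_a,b) --(T(id,rho_b), T(rho_a,id))--> T(a,b) ),
   computed by the standard explicit cokernel in A(A): the cokernel of
   gamma : (u <- r_u) -> (z <- r_z) is (z <- r_z (+) u) with structure map [rho_z, gamma]. *)
Definition That (C : AddCat) (T : BiFunctor C) (A B : FObj C) : FObj C :=
  FOb (fo (Tob T (fo A) (fo B)))
      (bsum (fr (Tob T (fo A) (fo B)))
            (bsum (fo (Tob T (fo A) (fr B))) (fo (Tob T (fr A) (fo B)))))
      (bmap (frho (Tob T (fo A) (fo B)))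
            (bmap (sval (Tmor T (idm (fo A)) (frho B)))
                  (sval (Tmor T (frho A) (idm (fo B)))))).

Definition That_rep (C : AddCat) (T : BiFunctor C) (A A' B B' : FObj C)
  (f : FHom A A') (g : FHom B B') : Hom (fo (That T A B)) (fo (That T A' B')) :=
  sval (Tmor T (sval f) (sval g)).

Definition has_right_adjoint (C : AddCat) (F_ob : FObj C -> FObj C)
  (F_rep : forall X X' : FObj C, FHom X X' -> Hom (fo (F_ob X)) (fo (F_ob X'))) : Prop :=
  exists (G_ob : FObj C -> FObj C)
         (G_mor : forall Y Y' : FObj C, FHom Y Y' -> FHom (G_ob Y) (G_ob Y'))
         (psi : forall X Y : FObj C, FHom X (G_ob Y) -> FHom (F_ob X) Y),
    (forall Y Y' (k k' : FHom Y Y'), fequiv k k' -> fequiv (G_mor _ _ k) (G_mor _ _ k')) /\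
    (forall Y, fequiv (G_mor _ _ (fid Y)) (fid (G_ob Y))) /\
    (forall Y Y' Y'' (k : FHom Y Y') (k' : FHom Y' Y''),
        fequiv (G_mor _ _ (fcomp k' k)) (fcomp (G_mor _ _ k') (G_mor _ _ k))) /\
    (forall X Y (g g' : FHom X (G_ob Y)), fequiv g g' -> fequiv (psi _ _ g) (psi _ _ g')) /\
    (forall X Y (g g' : FHom X (G_ob Y)), fequiv (psi _ _ g) (psi _ _ g') -> fequiv g g') /\
    (forall X Y (f : FHom (F_ob X) Y), exists g : FHom X (G_ob Y), fequiv (psi _ _ g) f) /\
    (forall X X' Y (h : FHom X' X) (g : FHom X (G_ob Y)),
        requiv Y (sval (psi _ _ (fcomp g h))) (comp (sval (psi _ _ g)) (F_rep _ _ h))) /\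
    (forall X Y Y' (k : FHom Y Y') (g : FHom X (G_ob Y)),
        fequiv (psi _ _ (fcomp (G_mor _ _ k) g)) (fcomp k (psi _ _ g))).

Definition tens_ob (C : AddCat) (T : BiFunctor C) (B : FObj C) (X : FObj C) : FObj C :=
  That T X B.
Definition tens_rep (C : AddCat) (T : BiFunctor C) (B : FObj C) (X X' : FObj C)
  (h : FHom X X') : Hom (fo (tens_ob T B X)) (fo (tens_ob T B X')) :=
  That_rep T h (fid B).

Arguments has_right_adjoint {C} F_ob F_rep.
Arguments tens_ob {C} T B X.
Arguments tens_rep {C} T B X X' h.

(* Write A = (a <- r_a), and let G_a, G_r be right adjoints of - (x) a and
   - (x) r_a.  By right exactness X (x) A is the cokernel of
   X (x) rho_a : X (x) r_a -> X (x) a, so maps X (x) A -> Y are the maps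
   X (x) a -> Y that vanish on X (x) rho_a.  Through the two adjunctions,
   precomposition with X (x) rho_a becomes postcomposition with the mate
   theta_Y : G_a Y -> G_r Y of eps_Y o (G_a Y (x) rho_a), eps being the counit
   of the first adjunction.  Hence Hom(X (x) A, Y) = Hom(X, ker theta_Y)
   naturally in X; kernels exist in A(A) because A has weak kernels, and by
   Yoneda Y |-> ker theta_Y is a right adjoint of - (x) A. *)

From Pilot Require Import Defs.
From mathcomp Require Import all_boot all_algebra.
From Stdlib Require Import ClassicalEpsilon.
(* Re-import Defs so that [Hom] means [Defs.Hom] rather than [vector.Hom]. *)
Import Pilot.Defs.
Set Implicit Arguments. Unset Strict Implicit. Unset Printing Implicit Defensive.
Import GRing.Theory.
Local Open Scope ring_scope.

Section AdditiveCategory.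
Variable C : AddCat.

Lemma comp0m (a b c : C) (f : Hom a b) : comp (0 : Hom b c) f = 0.
Proof. by apply: (addrI (comp (0 : Hom b c) f)); rewrite addr0 -compDl addr0. Qed.

Lemma compm0 (a b c : C) (g : Hom b c) : comp g (0 : Hom a b) = 0.
Proof. by apply: (addrI (comp g (0 : Hom a b))); rewrite addr0 -compDr addr0. Qed.

Lemma compNl (a b c : C) (g : Hom b c) (f : Hom a b) : comp (- g) f = - comp g f.
Proof. by apply/eqP; rewrite -subr_eq0 opprK -compDl addNr comp0m. Qed.

Lemma compNr (a b c : C) (g : Hom b c) (f : Hom a b) : comp g (- f) = - comp g f.
Proof. by apply/eqP; rewrite -subr_eq0 opprK -compDr addNr compm0. Qed.

Lemma compBl (a b c : C) (g1 g2 : Hom b c) (f : Hom a b) :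
  comp (g1 - g2) f = comp g1 f - comp g2 f.
Proof. by rewrite compDl compNl. Qed.

Lemma compBr (a b c : C) (g : Hom b c) (f1 f2 : Hom a b) :
  comp g (f1 - f2) = comp g f1 - comp g f2.
Proof. by rewrite compDr compNr. Qed.

Definition pairm (a b d : C) (x : Hom d a) (y : Hom d b) : Hom d (bsum a b) :=
  comp bin1 x + comp bin2 y.

Lemma bmap_comp (a b c d : C) (f : Hom a c) (g : Hom b c) (h : Hom d (bsum a b)) :
  comp (bmap f g) h = comp f (comp bpr1 h) + comp g (comp bpr2 h).
Proof. by rewrite /bmap compDl -!compA. Qed.

Lemma bpr1_pair (a b d : C) (x : Hom d a) (y : Hom d b) : comp bpr1 (pairm x y) = x.
Proof. by rewrite /pairm compDr !compA bpr1in1 bpr1in2 comp1m comp0m addr0. Qed.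

Lemma bpr2_pair (a b d : C) (x : Hom d a) (y : Hom d b) : comp bpr2 (pairm x y) = y.
Proof. by rewrite /pairm compDr !compA bpr2in1 bpr2in2 comp1m comp0m add0r. Qed.

Lemma bmap_pair (a b c d : C) (f : Hom a c) (g : Hom b c) (x : Hom d a) (y : Hom d b) :
  comp (bmap f g) (pairm x y) = comp f x + comp g y.
Proof. by rewrite bmap_comp bpr1_pair bpr2_pair. Qed.

Lemma bmap_in1 (a b c : C) (f : Hom a c) (g : Hom b c) : comp (bmap f g) bin1 = f.
Proof. by rewrite bmap_comp bpr1in1 bpr2in1 compm1 compm0 addr0. Qed.

Lemma bmap_in2 (a b c : C) (f : Hom a c) (g : Hom b c) : comp (bmap f g) bin2 = g.
Proof. by rewrite bmap_comp bpr1in2 bpr2in2 compm1 compm0 add0r. Qed.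

Lemma comp_bmap (a b c e : C) (k : Hom c e) (f : Hom a c) (g : Hom b c) :
  comp k (bmap f g) = bmap (comp k f) (comp k g).
Proof. by rewrite /bmap compDr !compA. Qed.

Definition factors (r y s : C) (rho : Hom r y) (m : Hom s y) :=
  exists w : Hom s r, m = comp rho w.

Lemma factors0 (r y s : C) (rho : Hom r y) : factors rho (0 : Hom s y).
Proof. by exists 0; rewrite compm0. Qed.

Lemma factorsD (r y s : C) (rho : Hom r y) (m1 m2 : Hom s y) :
  factors rho m1 -> factors rho m2 -> factors rho (m1 + m2).
Proof. by move=> [w1 ->] [w2 ->]; exists (w1 + w2); rewrite compDr. Qed.

Lemma factors_compr (r y s s' : C) (rho : Hom r y) (m : Hom s y) (h : Hom s' s) :
  factors rho m -> factors rho (comp m h).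
Proof. by move=> [w ->]; exists (comp w h); rewrite compA. Qed.

Lemma factors_trans (ry y z q s : C) (rY : Hom ry y) (f : Hom z y) (r : Hom q z)
    (m : Hom s z) :
  factors rY (comp f r) -> factors r m -> factors rY (comp f m).
Proof. by move=> [w1 e] [w ->]; rewrite compA e -compA; exists (comp w1 w). Qed.

Lemma factors_bmapP (r y a b : C) (rho : Hom r y) (p : Hom a y) (q : Hom b y) :
  factors rho (bmap p q) <-> factors rho p /\ factors rho q.
Proof.
split=> [[w e] | [[w1 ->] [w2 ->]]]; last by exists (bmap w1 w2); rewrite comp_bmap.
by split; [exists (comp w bin1) | exists (comp w bin2)];
  rewrite compA -e ?bmap_in1 ?bmap_in2.
Qed.

Lemma requivE (B : FObj C) (s : C) (u v : Hom s (fo B)) :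
  requiv B u v = factors (frho B) (u - v).
Proof. by []. Qed.

Lemma requiv0P (B : FObj C) (s : C) (u : Hom s (fo B)) :
  requiv B u 0 <-> factors (frho B) u.
Proof. by rewrite requivE subr0. Qed.

Lemma requiv_refl (B : FObj C) (s : C) (u : Hom s (fo B)) : requiv B u u.
Proof. by rewrite requivE subrr; apply: factors0. Qed.

Lemma eq_requiv (B : FObj C) (s : C) (u v : Hom s (fo B)) : u = v -> requiv B u v.
Proof. by move->; apply: requiv_refl. Qed.

Lemma requiv_sym (B : FObj C) (s : C) (u v : Hom s (fo B)) :
  requiv B u v -> requiv B v u.
Proof. by move=> [w e]; exists (- w); rewrite compNr -e opprB. Qed.

Lemma requiv_trans (B : FObj C) (s : C) (u v w : Hom s (fo B)) :
  requiv B u v -> requiv B v w -> requiv B u w.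
Proof. by move=> uv vw; rewrite requivE -(subrKA v); apply: factorsD. Qed.

Lemma requiv_compr (B : FObj C) (s s' : C) (u v : Hom s (fo B)) (h : Hom s' s) :
  requiv B u v -> requiv B (comp u h) (comp v h).
Proof. by rewrite !requivE -compBl; apply: factors_compr. Qed.

Lemma requiv_compl_factors (B Y : FObj C) (s : C) (u v : Hom s (fo B))
    (f : Hom (fo B) (fo Y)) :
  factors (frho Y) (comp f (frho B)) -> requiv B u v ->
  requiv Y (comp f u) (comp f v).
Proof. by rewrite !requivE -compBr; apply: factors_trans. Qed.

Lemma requiv_compl (B Y : FObj C) (s : C) (u v : Hom s (fo B)) (k : FHom B Y) :
  requiv B u v -> requiv Y (comp (sval k) u) (comp (sval k) v).
Proof. exact: requiv_compl_factors (proj2_sig k). Qed.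

Lemma requiv_factors (ry y z q s : C) (rY : Hom ry y) (f : Hom z y) (r : Hom q z)
    (u v : Hom s z) :
  factors r (u - v) -> factors rY (comp f r) -> factors rY (comp f v) ->
  factors rY (comp f u).
Proof.
move=> ruv frY fvY; rewrite -(subrK v u) compDr.
by apply: factorsD fvY; apply: factors_trans ruv.
Qed.

Lemma requiv_factors_compr (Y : FObj C) (s s' : C) (u v : Hom s (fo Y)) (h : Hom s' s) :
  requiv Y u v -> factors (frho Y) (comp v h) -> factors (frho Y) (comp u h).
Proof.
move=> uv vh; rewrite -(subrK v u) compDl.
by apply: factorsD vh; apply: factors_compr.
Qed.

Lemma fid_fcomp (X Y : FObj C) (g : FHom X Y) : fequiv (fcomp (fid Y) g) g.
Proof. by apply: eq_requiv; rewrite /= comp1m. Qed.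

Lemma fzero_proof (X Y : FObj C) :
  exists omega : Hom (fr X) (fr Y),
    comp (0 : Hom (fo X) (fo Y)) (frho X) = comp (frho Y) omega.
Proof. by exists 0; rewrite comp0m compm0. Qed.

Definition fzero (X Y : FObj C) : FHom X Y := exist _ 0 (fzero_proof X Y).

End AdditiveCategory.

Section AdjointBijection.
Variables (C : AddCat) (F_ob : FObj C -> FObj C)
  (F_rep : forall X X' : FObj C, FHom X X' -> Hom (fo (F_ob X)) (fo (F_ob X'))).

(* Only naturality in X is asked for: the action of G on morphisms and
   naturality in Y are then forced, see [has_right_adjointP]. *)
Record adjoint_bijection (G_ob : FObj C -> FObj C)
    (psi : forall {X Y}, FHom X (G_ob Y) -> FHom (F_ob X) Y) : Prop := {
  psi_wd : forall X Y (g g' : FHom X (G_ob Y)), fequiv g g' -> fequiv (psi g) (psi g');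
  psi_inj : forall X Y (g g' : FHom X (G_ob Y)), fequiv (psi g) (psi g') -> fequiv g g';
  psi_surj : forall X Y (f : FHom (F_ob X) Y), exists g : FHom X (G_ob Y), fequiv (psi g) f;
  psi_natl : forall X X' Y (h : FHom X' X) (g : FHom X (G_ob Y)),
    requiv Y (sval (psi (fcomp g h))) (comp (sval (psi g)) (F_rep h))
}.

Variables (G_ob : FObj C -> FObj C)
  (psi : forall {X Y}, FHom X (G_ob Y) -> FHom (F_ob X) Y).
Hypothesis adj : adjoint_bijection (@psi).

Definition psi_inv X Y (f : FHom (F_ob X) Y) : FHom X (G_ob Y) :=
  proj1_sig (constructive_indefinite_description _ (psi_surj adj f)).

Lemma psi_invK X Y (f : FHom (F_ob X) Y) : fequiv (psi (psi_inv f)) f.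
Proof. exact: proj2_sig (constructive_indefinite_description _ (psi_surj adj f)). Qed.

Lemma psi_fzero X Y :
  requiv (F_ob X) (F_rep (fzero X X)) 0 -> requiv Y (sval (psi (fzero X (G_ob Y)))) 0.
Proof.
move=> F0; have zero_comp : fequiv (fcomp (fzero X (G_ob Y)) (fzero X X)) (fzero X _).
  by apply: eq_requiv; rewrite /= comp0m.
apply: requiv_trans (requiv_sym (psi_wd adj zero_comp)) _.
apply: requiv_trans (psi_natl adj _ _) _.
apply: requiv_trans (requiv_compl (psi _) F0) _.
by rewrite compm0; apply: requiv_refl.
Qed.

Definition G_mor Y Y' (k : FHom Y Y') : FHom (G_ob Y) (G_ob Y') :=
  psi_inv (fcomp k (psi (fid (G_ob Y)))).

Lemma psi_natr X Y Y' (k : FHom Y Y') (g : FHom X (G_ob Y)) :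
  fequiv (psi (fcomp (G_mor k) g)) (fcomp k (psi g)).
Proof.
apply: requiv_trans (psi_natl adj _ _) _.
apply: requiv_trans (requiv_compr _ (psi_invK _)) _ => /=.
rewrite -compA; apply: requiv_compl.
apply: requiv_trans (requiv_sym (psi_natl adj _ _)) _.
exact: (psi_wd adj (fid_fcomp g)).
Qed.

Lemma G_mor_wd Y Y' (k k' : FHom Y Y') : fequiv k k' -> fequiv (G_mor k) (G_mor k').
Proof.
move=> kk'; apply: (psi_inj adj).
apply: requiv_trans (psi_invK _) _; apply: requiv_sym.
apply: requiv_trans (psi_invK _) _.
exact: requiv_compr (requiv_sym kk').
Qed.

Lemma G_mor_id Y : fequiv (G_mor (fid Y)) (fid (G_ob Y)).
Proof.
apply: (psi_inj adj); apply: requiv_trans (psi_invK _) _.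
by apply: eq_requiv; rewrite /= comp1m.
Qed.

Lemma G_mor_comp Y Y' Y'' (k : FHom Y Y') (k' : FHom Y' Y'') :
  fequiv (G_mor (fcomp k' k)) (fcomp (G_mor k') (G_mor k)).
Proof.
apply: (psi_inj adj); apply: requiv_trans (psi_invK _) _; apply: requiv_sym.
apply: requiv_trans (psi_natr _ _) _ => /=.
apply: requiv_trans (requiv_compl k' (psi_invK _)) _.
by apply: eq_requiv; rewrite /= compA.
Qed.

End AdjointBijection.

Arguments adjoint_bijection {C F_ob} F_rep {G_ob} psi.

Lemma has_right_adjointP (C : AddCat) (F_ob : FObj C -> FObj C)
    (F_rep : forall X X' : FObj C, FHom X X' -> Hom (fo (F_ob X)) (fo (F_ob X'))) :
  has_right_adjoint F_ob F_rep <->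
  exists (G_ob : FObj C -> FObj C) (psi : forall X Y, FHom X (G_ob Y) -> FHom (F_ob X) Y),
    adjoint_bijection F_rep psi.
Proof.
split=> [[G_ob [_ [psi [_ [_ [_ [wd [inj [surj [natl _]]]]]]]]]] | [G_ob [psi adj]]].
  by exists G_ob, psi; split.
exists G_ob, (G_mor adj), psi; do ![split].
- exact: G_mor_wd.
- exact: G_mor_id.
- exact: G_mor_comp.
- exact: psi_wd adj.
- exact: psi_inj adj.
- exact: psi_surj adj.
- exact: psi_natl adj.
- exact: psi_natr.
Qed.

Section Tensor.
Variables (C : AddCat) (T : BiFunctor C).

Local Notation Tid_rho x B := (sval (Tmor T (idm x) (frho B))).
Local Notation Trho_id X b := (sval (Tmor T (frho X) (idm b))).

Lemma Tmor0r (x x' b b' : C) (al : Hom x x') :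
  requiv (Tob T x' b') (sval (Tmor T al (0 : Hom b b'))) 0.
Proof.
have := TmorDr T al (0 : Hom b b') 0; rewrite addr0 requivE => -[w e].
by exists (- w); rewrite compNr -e subr0 opprB addrK.
Qed.

Lemma Tmor0l (x x' b b' : C) (be : Hom b b') :
  requiv (Tob T x' b') (sval (Tmor T (0 : Hom x x') be)) 0.
Proof.
have := TmorDl T (0 : Hom x x') 0 be; rewrite addr0 requivE => -[w e].
by exists (- w); rewrite compNr -e subr0 opprB addrK.
Qed.

Lemma Tmor_interchange (x x' b b' : C) (al : Hom x x') (be : Hom b b') :
  requiv (Tob T x' b')
    (comp (sval (Tmor T (idm x') be)) (sval (Tmor T al (idm b))))
    (comp (sval (Tmor T al (idm b'))) (sval (Tmor T (idm x) be))).
Proof.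
have e1 := Tmor_comp T al (idm x') (idm b) be.
have e2 := Tmor_comp T (idm x) al be (idm b').
rewrite comp1m compm1 in e1; rewrite compm1 comp1m in e2.
exact: requiv_trans (requiv_sym e1) e2.
Qed.

Lemma requiv_That (X B : FObj C) (s : C) (u v : Hom s (fo (Tob T (fo X) (fo B)))) :
  requiv (Tob T (fo X) (fo B)) u v -> requiv (That T X B) u v.
Proof. by move=> [w e]; exists (comp bin1 w); rewrite /= compA bmap_in1. Qed.

Lemma tens_rep0 (B X : FObj C) : requiv (tens_ob T B X) (tens_rep T B X X (fzero X X)) 0.
Proof. exact/requiv_That/Tmor0l. Qed.

Lemma That_factorsP (X B Y : FObj C) (f : Hom (fo (Tob T (fo X) (fo B))) (fo Y)) :
  factors (frho Y) (comp f (frho (That T X B))) <->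
  [/\ factors (frho Y) (comp f (frho (Tob T (fo X) (fo B)))),
      factors (frho Y) (comp f (Tid_rho (fo X) B)) &
      factors (frho Y) (comp f (Trho_id X (fo B)))].
Proof.
rewrite /= !comp_bmap !factors_bmapP.
by split=> [[? []] | []]; split.
Qed.

Section ThatHom.
Variables (X B Y : FObj C) (f : FHom (That T X B) Y).

Lemma That_hom_rhoT : factors (frho Y) (comp (sval f) (frho (Tob T (fo X) (fo B)))).
Proof. by case/That_factorsP: (proj2_sig f). Qed.

Lemma That_hom_Tid_rho : factors (frho Y) (comp (sval f) (Tid_rho (fo X) B)).
Proof. by case/That_factorsP: (proj2_sig f). Qed.

Lemma That_hom_Trho_id : factors (frho Y) (comp (sval f) (Trho_id X (fo B))).
Proof. by case/That_factorsP: (proj2_sig f). Qed.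

End ThatHom.

Lemma factors_Tmor0 (X B Y : FObj C) (f : FHom (That T X B) Y) (s : C)
    (u : Hom s (fo (Tob T (fo X) (fo B)))) :
  requiv (Tob T (fo X) (fo B)) u 0 -> factors (frho Y) (comp (sval f) u).
Proof.
move=> u0; apply: (requiv_factors (v := 0)) u0 (That_hom_rhoT f) _.
by rewrite compm0; apply: factors0.
Qed.

Lemma precomp_coker_proof (X B Y : FObj C) (f : FHom (That T X B) Y) :
  exists omega, comp (sval f) (frho (That T X (obj_in (fo B)))) = comp (frho Y) omega.
Proof.
apply/(That_factorsP (B := obj_in (fo B))); split.
- exact: (That_hom_rhoT f).
- exact: (factors_Tmor0 f (Tmor0r _ _ _)).
- exact: (That_hom_Trho_id f).
Qed.

Definition precomp_coker (X B Y : FObj C) (f : FHom (That T X B) Y) :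
  FHom (That T X (obj_in (fo B))) Y := exist _ (sval f) (precomp_coker_proof f).

Lemma coker_lift_proof (X B Y : FObj C) (f : FHom (That T X (obj_in (fo B))) Y) :
  factors (frho Y) (comp (sval f) (Tid_rho (fo X) B)) ->
  exists omega, comp (sval f) (frho (That T X B)) = comp (frho Y) omega.
Proof.
move=> f_rhoB; apply/That_factorsP; split=> //.
- exact: (That_hom_rhoT f).
- exact: (That_hom_Trho_id f).
Qed.

Definition coker_lift (X B Y : FObj C) (f : FHom (That T X (obj_in (fo B))) Y)
    (f_rhoB : factors (frho Y) (comp (sval f) (Tid_rho (fo X) B))) :
  FHom (That T X B) Y := exist _ (sval f) (coker_lift_proof f_rhoB).

Lemma precomp_Tid_rho_proof (X B Y : FObj C) (f : FHom (That T X (obj_in (fo B))) Y) :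
  exists omega, comp (comp (sval f) (Tid_rho (fo X) B))
                     (frho (That T X (obj_in (fr B)))) = comp (frho Y) omega.
Proof.
apply/(That_factorsP (B := obj_in (fr B))); split; rewrite -compA.
- exact: factors_trans (That_hom_rhoT f) (proj2_sig (Tmor T (idm (fo X)) (frho B))).
- apply: factors_Tmor0; rewrite -(compm0 _ (Tid_rho (fo X) B)).
  exact/requiv_compl/Tmor0r.
- apply: requiv_factors (Tmor_interchange _ _) (That_hom_rhoT f) _.
  by rewrite compA; apply/factors_compr/That_hom_Trho_id.
Qed.

Definition precomp_Tid_rho (X B Y : FObj C) (f : FHom (That T X (obj_in (fo B))) Y) :
  FHom (That T X (obj_in (fr B))) Y := exist _ _ (precomp_Tid_rho_proof f).

End Tensor.

Section FreydKernel.
Variables (C : AddCat) (wk : has_weak_kernels C).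

Lemma weak_kernel_sig (x y : C) (al : Hom x y) :
  {k : C & {iota : Hom k x | comp al iota = 0 /\
     forall (s : C) (tau : Hom s x), comp al tau = 0 ->
       exists sigma : Hom s k, tau = comp iota sigma}}.
Proof.
have [k Hk] := constructive_indefinite_description _ (wk al).
have [iota Hiota] := constructive_indefinite_description _ Hk.
by exists k, iota.
Qed.

Definition wker (x y : C) (al : Hom x y) : C := projT1 (weak_kernel_sig al).

Definition wker_incl (x y : C) (al : Hom x y) : Hom (wker al) x :=
  sval (projT2 (weak_kernel_sig al)).

Lemma wker_inclK (x y : C) (al : Hom x y) : comp al (wker_incl al) = 0.
Proof. exact: (proj1 (proj2_sig (projT2 (weak_kernel_sig al)))). Qed.

Lemma wker_lift (x y s : C) (al : Hom x y) (tau : Hom s x) :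
  comp al tau = 0 -> exists sigma : Hom s (wker al), tau = comp (wker_incl al) sigma.
Proof. exact: (proj2 (proj2_sig (projT2 (weak_kernel_sig al)))). Qed.

Variables (U V : FObj C) (t : Hom (fo U) (fo V)).

(* The kernel of [t] in A(A): its underlying object weakly classifies the pairs
   (u, l) with [t u = - rho_V l], and its relations weakly classify the pairs
   (k, m) with [iota k = - rho_U m]. *)
Definition fker_incl_rep : Hom (wker (bmap t (frho V))) (fo U) :=
  comp bpr1 (wker_incl (bmap t (frho V))).

Definition fker : FObj C :=
  FOb (wker (bmap t (frho V))) (wker (bmap fker_incl_rep (frho U)))
      (comp bpr1 (wker_incl (bmap fker_incl_rep (frho U)))).

Lemma fker_incl_proof : exists omega : Hom (fr fker) (fr U),
  comp fker_incl_rep (frho fker) = comp (frho U) omega.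
Proof.
exists (- comp bpr2 (wker_incl (bmap fker_incl_rep (frho U)))).
by apply/eqP; rewrite compNr -subr_eq0 opprK -bmap_comp wker_inclK.
Qed.

Definition fker_incl : FHom fker U := exist _ fker_incl_rep fker_incl_proof.

Lemma fker_inclK : requiv V (comp t (sval fker_incl)) 0.
Proof.
apply/requiv0P; exists (- comp bpr2 (wker_incl (bmap t (frho V)))).
by apply/eqP; rewrite compNr -subr_eq0 opprK /= /fker_incl_rep -bmap_comp wker_inclK.
Qed.

Lemma fker_lift (X : FObj C) (g : FHom X U) :
  requiv V (comp t (sval g)) 0 ->
  exists g' : FHom X fker, comp (sval fker_incl) (sval g') = sval g.
Proof.
move=> /requiv0P [lam e].
have [sig esig] :
    exists sig, pairm (sval g) (- lam) = comp (wker_incl (bmap t (frho V))) sig.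
  by apply: wker_lift; rewrite bmap_pair e compNr subrr.
have g_sig : sval g = comp fker_incl_rep sig by rewrite -compA -esig bpr1_pair.
have [om eom] := proj2_sig g.
have [nu enu] : exists nu,
    pairm (comp sig (frho X)) (- om) = comp (wker_incl (bmap fker_incl_rep (frho U))) nu.
  by apply: wker_lift; rewrite bmap_pair compA -g_sig eom compNr subrr.
have sig_proof : exists om', comp sig (frho X) = comp (frho fker) om'.
  by exists nu; rewrite /= -compA -enu bpr1_pair.
by exists (exist _ sig sig_proof).
Qed.

Lemma fker_incl_inj (X : FObj C) (g1 g2 : FHom X fker) :
  requiv U (comp (sval fker_incl) (sval g1)) (comp (sval fker_incl) (sval g2)) ->
  fequiv g1 g2.
Proof.
move=> [lam e].
have [nu enu] : exists nu,
    pairm (sval g1 - sval g2) (- lam) = comp (wker_incl (bmap fker_incl_rep (frho U))) nu.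
  by apply: wker_lift; rewrite bmap_pair compBr e compNr subrr.
by exists nu; rewrite /= -compA -enu bpr1_pair.
Qed.

End FreydKernel.

Section RightAdjoint.
Variables (C : AddCat) (T : BiFunctor C) (A : FObj C).
Hypothesis wk : has_weak_kernels C.
Variables (Ga : FObj C -> FObj C)
  (psia : forall {X Y}, FHom X (Ga Y) -> FHom (tens_ob T (obj_in (fo A)) X) Y).
Hypothesis adja : adjoint_bijection (tens_rep T (obj_in (fo A))) (@psia).
Variables (Gr : FObj C -> FObj C)
  (psir : forall {X Y}, FHom X (Gr Y) -> FHom (tens_ob T (obj_in (fr A)) X) Y).
Hypothesis adjr : adjoint_bijection (tens_rep T (obj_in (fr A))) (@psir).

Local Notation rhoA X := (sval (Tmor T (idm (fo X)) (frho A))).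

Definition theta Y : FHom (Ga Y) (Gr Y) :=
  psi_inv adjr (precomp_Tid_rho (psia (fid (Ga Y)))).

Lemma psir_theta X Y (g : FHom X (Ga Y)) :
  requiv Y (sval (psir (fcomp (theta Y) g))) (comp (sval (psia g)) (rhoA X)).
Proof.
apply: requiv_trans (psi_natl adjr g (theta Y)) _.
apply: requiv_trans (requiv_compr _ (psi_invK adjr _)) _ => /=.
rewrite -compA.
apply: requiv_trans
  (requiv_compl_factors (That_hom_rhoT (psia (fid (Ga Y)))) (Tmor_interchange T _ _)) _.
rewrite compA; apply: requiv_compr.
apply: requiv_trans (requiv_sym (psi_natl adja g (fid _))) _.
exact: (psi_wd adja (fid_fcomp g)).
Qed.

Lemma theta_comp_eq0P X Y (g : FHom X (Ga Y)) :
  requiv (Gr Y) (comp (sval (theta Y)) (sval g)) 0 <->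
  factors (frho Y) (comp (sval (psia g)) (rhoA X)).
Proof.
have psir0 := psi_fzero adjr Y (tens_rep0 T (obj_in (fr A)) X).
rewrite -requiv0P; split=> [theta_g0 | psia_g0].
  have theta_g0' : fequiv (fcomp (theta Y) g) (fzero X (Gr Y)) := theta_g0.
  apply: requiv_trans (requiv_sym (psir_theta g)) _.
  exact: requiv_trans (psi_wd adjr theta_g0') psir0.
suff : fequiv (fcomp (theta Y) g) (fzero X (Gr Y)) by [].
apply: (psi_inj adjr).
apply: requiv_trans (psir_theta g) _.
exact: requiv_trans psia_g0 (requiv_sym psir0).
Qed.

Definition GA Y : FObj C := fker wk (sval (theta Y)).

Definition GA_incl Y : FHom (GA Y) (Ga Y) := fker_incl wk (sval (theta Y)).

Lemma psiA_proof X Y (g : FHom X (GA Y)) :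
  factors (frho Y) (comp (sval (psia (fcomp (GA_incl Y) g))) (rhoA X)).
Proof.
apply/theta_comp_eq0P; rewrite /= compA.
apply: requiv_trans (requiv_compr (sval g) (fker_inclK wk _)) _.
by apply: eq_requiv; rewrite comp0m.
Qed.

Definition psiA X Y (g : FHom X (GA Y)) : FHom (tens_ob T A X) Y :=
  coker_lift (psiA_proof g).

Lemma psiA_surj X Y (f : FHom (tens_ob T A X) Y) :
  exists g : FHom X (GA Y), fequiv (psiA g) f.
Proof.
pose g := psi_inv adja (precomp_coker f).
have psia_g : fequiv (psia g) (precomp_coker f) := psi_invK adja _.
have /theta_comp_eq0P theta_g0 : factors (frho Y) (comp (sval (psia g)) (rhoA X)).
  exact: requiv_factors_compr psia_g (That_hom_Tid_rho f).
have [g' incl_g'] := fker_lift wk theta_g0.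
exists g'; apply: requiv_trans _ psia_g.
exact/(psi_wd adja)/eq_requiv.
Qed.

Lemma tensA_adjoint_bijection : adjoint_bijection (tens_rep T A) psiA.
Proof.
split.
- move=> X Y g g' gg'; apply: (psi_wd adja).
  exact: requiv_compl (GA_incl Y) gg'.
- by move=> X Y g g' /(psi_inj adja); apply: fker_incl_inj.
- exact: psiA_surj.
- move=> X X' Y h g; apply: requiv_trans (psi_natl adja h (fcomp (GA_incl Y) g)).
  exact/(psi_wd adja)/eq_requiv/compA.
Qed.

End RightAdjoint.

Theorem theorem3p21 (C : AddCat) (T : BiFunctor C) (A : FObj C) :
  has_weak_kernels C ->
  has_right_adjoint (tens_ob T (obj_in (fo A))) (tens_rep T (obj_in (fo A))) ->
  has_right_adjoint (tens_ob T (obj_in (fr A))) (tens_rep T (obj_in (fr A))) ->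
  has_right_adjoint (tens_ob T A) (tens_rep T A).
Proof.
move=> wk /has_right_adjointP [Ga [psia adja]] /has_right_adjointP [Gr [psir adjr]].
apply/has_right_adjointP; do 2!eexists.
exact: (tensA_adjoint_bijection wk adja adjr).
Qed.
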